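(* Let $G$ be a signed digraph and let $i\neq j$ be vertices such that $G$ has an arc from $i$ to $j$ and $d^{\mathrm{in}}_G(i)=d^{\mathrm{out}}_G(i)=d^{\mathrm{in}}_G(j)=1$. Let $H$ be the spanning subgraph obtained from $G$ by removing this arc, and let $h:Y\to Y$ be any degree-bounded finite dynamical system on $H$. Then there is no degree-bounded finite dynamical system $f:X\to X$ on $G$ that converges toward $h$ (in any number of steps).
   Context: A finite dynamical system (FDS) with $n$ components is a map $f=(f_1,\dots,f_n):X\to X$ where $X=X_1\times\cdots\times X_n$ and each $X_i$ is a nonempty finite interval of integers; $f^k$ denotes the $k$-fold composition. For FDSs $f:X\to X$ and $h:Y\to Y$ with $n$ components, $f$ converges toward $h$ in $k$ steps if $f^k(X)\subseteq h(Y)\subseteq Y\subseteq X$ and $f(x)=h(x)$ for all $x\in Y$. A signed digraph is a pair $G=(V,E)$ with $E\subseteq V\times V\times\{+,-\}$; $(j,i,s)\in E$ is an arc from $j$ to $i$ of sign $s$ (loops and parallel arcs of opposite sign allowed). The in-degree $d^{\mathrm{in}}_G(i)$ is the number of arcs entering $i$ and the out-degree $d^{\mathrm{out}}_G(i)$ the number of arcs leaving $i$ (positive and negative arcs counted separately). A spanning subgraph has the same vertex set and a subset of the arcs. The interaction graph of an FDS $f$ is the signed digraph on $\{1,\dots,n\}$ with a positive (resp. negative) arc from $j$ to $i$ iff there is $x\in X$ with $x_j<\max(X_j)$ such that $f_i(x+e_j)-f_i(x)$ is positive (resp. negative), $e_j$ the $j$-th unit vector. $f$ is an FDS on $G$ if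 $G$ is its interaction graph. $f$ is degree-bounded if, with $G$ its interaction graph, for every $i$: $|X_i|=2$ if $d^{\mathrm{out}}_G(i)=0<d^{\mathrm{in}}_G(i)$, and $|X_i|\le d^{\mathrm{out}}_G(i)+1$ otherwise. *)

From mathcomp Require Import all_boot all_order all_algebra.
Set Implicit Arguments. Unset Strict Implicit. Unset Printing Implicit Defensive.
Import Order.TTheory GRing.Theory Num.Theory.
Local Open Scope ring_scope.

(* Components are indexed by 'I_n (i.e. {1,...,n} shifted to {0,...,n-1}).
   The domain X = X_1 x ... x X_n is given by bounds lo, hi with
   X_i = [lo i, hi i] (integer interval, nonempty iff lo i <= hi i).
   An FDS is a map on states that sends X into X (its values outside X
   are irrelevant for every notion below). *)

Definition state (n : nat) := {ffun 'I_n -> int}.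

Definition inX n (lo hi : 'I_n -> int) (x : state n) : Prop :=
  forall i, lo i <= x i <= hi i.

Definition is_FDS n (lo hi : 'I_n -> int) (f : state n -> state n) : Prop :=
  (forall i, lo i <= hi i) /\ (forall x, inX lo hi x -> inX lo hi (f x)).

(* Signed digraph on 'I_n: a set of arcs ((j, i), s) = arc from j to i,
   sign s (true = +, false = -). *)
Definition sdigraph (n : nat) := {set ('I_n * 'I_n * bool)}.

Definition din n (E : sdigraph n) (i : 'I_n) : nat :=
  #|[set a in E | a.1.2 == i]|.
Definition dout n (E : sdigraph n) (i : 'I_n) : nat :=
  #|[set a in E | a.1.1 == i]|.

Definition incr n (x : state n) (j : 'I_n) : state n :=
  [ffun k => x k + (k == j)%:R].

Definition is_interaction_graph n (lo hi : 'I_n -> int)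
    (f : state n -> state n) (E : sdigraph n) : Prop :=
  forall (j i : 'I_n) (s : bool),
    ((j, i, s) \in E) <->
    (exists x : state n, inX lo hi x /\ x j < hi j /\
       (if s then f x i < f (incr x j) i else f (incr x j) i < f x i)).

Definition degree_bound n (lo hi : 'I_n -> int) (E : sdigraph n) : Prop :=
  forall i : 'I_n,
    if (dout E i == 0%N) && (0 < din E i)%N
    then hi i - lo i + 1 = 2
    else hi i - lo i + 1 <= (dout E i).+1%:Z.

Definition degree_bounded_FDS_on n (lo hi : 'I_n -> int)
    (f : state n -> state n) (E : sdigraph n) : Prop :=
  [/\ is_FDS lo hi f, is_interaction_graph lo hi f E & degree_bound lo hi E].

Definition converges_in n (k : nat)
    (loX hiX : 'I_n -> int) (f : state n -> state n)
    (loY hiY : 'I_n -> int) (h : state n -> state n) : Prop :=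
  [/\ (forall x, inX loX hiX x -> exists2 y, inX loY hiY y & iter k f x = h y),
      (forall y, inX loY hiY y -> inX loY hiY (h y)),
      (forall y, inX loY hiY y -> inX loX hiX y) &
      (forall y, inX loY hiY y -> f y = h y)].

(* In H the vertex j has no in-arc, so h_j is constant on Y, and i has in-degree 1 and
   out-degree 0, so |Y_i| = 2.  In G the only arc into j comes from i, so f_j depends on
   x_i alone, and dout i = 1 forces |X_i| <= 2; hence X_i = Y_i.  Every value of x_i is
   therefore realised by some y in Y, where f_j y = h_j y is the constant of h_j, so f_j
   is constant on X, and G cannot have the arc from i to j. *)

From mathcomp Require Import all_boot all_order all_algebra zify.
Import Order.TTheory GRing.Theory Num.Theory.
Set Implicit Arguments. Unset Strict Implicit. Unset Printing Implicit Defensive.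
Local Open Scope ring_scope.

Definition decr n (x : state n) (j : 'I_n) : state n :=
  [ffun k => x k - (k == j)%:R].

Lemma incr_decr n (x : state n) j : incr (decr x j) j = x.
Proof. by apply/ffunP => k; rewrite !ffunE subrK. Qed.

Lemma incr_inX n (lo hi : 'I_n -> int) (x : state n) j :
  inX lo hi x -> x j < hi j -> inX lo hi (incr x j).
Proof. by move=> xX ltj k; rewrite ffunE; have := xX k; case: eqP => [->|]; lia. Qed.

Lemma decr_inX n (lo hi : 'I_n -> int) (x : state n) j :
  inX lo hi x -> lo j < x j -> inX lo hi (decr x j).
Proof. by move=> xX ltj k; rewrite ffunE; have := xX k; case: eqP => [->|]; lia. Qed.

Lemma inX_bounds n (loX hiX loY hiY : 'I_n -> int) :
  (forall l, loY l <= hiY l) -> (forall y, inX loY hiY y -> inX loX hiX y) ->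
  forall l, loX l <= loY l /\ hiY l <= hiX l.
Proof.
move=> neY subYX l.
have cstX (b : 'I_n -> int) : (forall k, loY k <= b k <= hiY k) ->
    loX l <= b l <= hiX l.
  move=> bY; have bY' : inX loY hiY [ffun k => b k] by move=> k; rewrite ffunE.
  by have := subYX _ bY' l; rewrite ffunE.
have /andP[-> _] : loX l <= loY l <= hiX l by apply: cstX => k; rewrite lexx neY.
by have /andP[_ ->] : loX l <= hiY l <= hiX l by apply: cstX => k; rewrite lexx neY.
Qed.

Section IncrInvariant.

Variables (n : nat) (lo hi : 'I_n -> int) (T : Type) (g : state n -> T).
Variable P : pred 'I_n.
Hypothesis g_incr :
  forall x l, P l -> inX lo hi x -> x l < hi l -> g (incr x l) = g x.

Let lower (x : state n) : state n := [ffun l => if P l then lo l else x l].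

Lemma incr_invariant_lower x : inX lo hi x -> g x = g (lower x).
Proof.
pose dist (x : state n) := (\sum_(l | P l) `|x l - lo l|)%N.
have [m] := ubnP (dist x); elim: m x => // m IH x lt_xm xX.
case: (pickP [pred l | P l && (lo l < x l)]) => [l /andP[Pl ltl] | none]; last first.
  congr g; apply/ffunP => l; rewrite ffunE; case Pl: (P l) => //.
  by have := none l; have := xX l; rewrite /= Pl /=; lia.
have dist_decr : (dist (decr x l) < dist x)%N.
  rewrite /dist (bigD1 l) //= [X in (_ < X)%N](bigD1 l) //= ffunE eqxx.
  rewrite (eq_bigr (fun k => `|x k - lo k|%N)) => [|k /andP[_ /negbTE]].
    by rewrite ltn_add2r; lia.
  by rewrite ffunE => ->; rewrite subr0.
have lower_decr : lower (decr x l) = lower x.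
  by apply/ffunP => k; rewrite !ffunE; case: eqP => [->|]; rewrite ?Pl ?subr0.
have decrX : inX lo hi (decr x l) := decr_inX xX ltl.
have decr_lt : decr x l l < hi l by have := xX l; rewrite ffunE eqxx; lia.
rewrite -[in LHS](incr_decr x l) g_incr // IH ?lower_decr //.
exact: leq_trans dist_decr _.
Qed.

Lemma incr_invariant_agree x y : inX lo hi x -> inX lo hi y ->
  (forall l, ~~ P l -> x l = y l) -> g x = g y.
Proof.
move=> xX yX xy; rewrite incr_invariant_lower // [RHS]incr_invariant_lower //.
by congr g; apply/ffunP => l; rewrite !ffunE; case: ifPn => // /xy.
Qed.

End IncrInvariant.

Lemma interaction_no_arc n (lo hi : 'I_n -> int) f (E : sdigraph n) j i x :
  is_interaction_graph lo hi f E ->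
  (j, i, true) \notin E -> (j, i, false) \notin E ->
  inX lo hi x -> x j < hi j -> f (incr x j) i = f x i.
Proof.
move=> EG /negP noP /negP noN xX ltj.
case: (ltgtP (f x i) (f (incr x j) i)) => // ltf.
- by case: noP; apply/EG; exists x.
- by case: noN; apply/EG; exists x.
Qed.

Lemma din1_arc n (E : sdigraph n) i j s l b :
  din E j = 1%N -> (i, j, s) \in E -> (l, j, b) \in E -> (l, b) = (i, s).
Proof.
move=> /eqP/cards1P[a Ej] ijE ljE.
have /set1P lE : (l, j, b) \in [set a] by rewrite -Ej inE ljE eqxx.
have /set1P iE : (i, j, s) \in [set a] by rewrite -Ej inE ijE eqxx.
by move: lE; rewrite -iE => -[-> ->].
Qed.

Lemma dout_setD1 n (E : sdigraph n) i j s :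
  (i, j, s) \in E -> dout (E :\ (i, j, s)) i = (dout E i).-1.
Proof.
move=> ijE; rewrite /dout (cardsD1 (i, j, s) [set a in E | a.1.1 == i]) inE ijE eqxx.
by apply: eq_card => a; rewrite !inE andbA.
Qed.

Lemma din_setD1 n (E : sdigraph n) i j s :
  i != j -> din (E :\ (i, j, s)) i = din E i.
Proof.
move=> nij; apply: eq_card => a; rewrite !inE.
by case: eqP => [->|] //=; rewrite eq_sym (negbTE nij) andbF.
Qed.

Theorem mainTheorem4 (n : nat) (E : sdigraph n) (i j : 'I_n) (s : bool) :
  i != j ->
  (i, j, s) \in E ->
  din E i = 1%N -> dout E i = 1%N -> din E j = 1%N ->
  forall (loY hiY : 'I_n -> int) (h : state n -> state n),
    degree_bounded_FDS_on loY hiY h (E :\ (i, j, s)) ->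
    ~ exists (loX hiX : 'I_n -> int) (f : state n -> state n) (k : nat),
        degree_bounded_FDS_on loX hiX f E /\
        converges_in k loX hiX f loY hiY h.
Proof.
move=> nij ijE dini douti dinj loY hiY h [[neY _] hH degH]
  [loX [hiX [f [_ [[[neX _] fG degG] [_ _ subYX fh]]]]]].
have only_ij l b : (l, j, b) \in E -> (l, b) = (i, s) := din1_arc dinj ijE.
have no_arc_into_j l b : (l, j, b) \notin E :\ (i, j, s).
  by rewrite !inE negb_and negbK; case: (boolP (_ \in E)) => [/only_ij[-> ->]|];
     rewrite ?eqxx ?orbT.
have h_incr y l : predT l -> inX loY hiY y -> y l < hiY l ->
    h (incr y l) j = h y j.
  by move=> _; apply: (interaction_no_arc hH).
have f_incr x l : l != i -> inX loX hiX x -> x l < hiX l ->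
    f (incr x l) j = f x j.
  by move=> nli; apply: (interaction_no_arc fG); apply/negP => /only_ij[eli];
     rewrite eli eqxx in nli.
have sizeY : hiY i - loY i + 1 = 2.
  by have := degH i; rewrite dout_setD1 // din_setD1 // douti dini.
have sizeX : hiX i - loX i + 1 <= 2 by have := degG i; rewrite douti.
have [loXY hiYX] := inX_bounds neY subYX i.
pose c := h [ffun l => loY l] j.
have c_on_Y y : inX loY hiY y -> h y j = c.
  move=> yY; apply: (incr_invariant_agree h_incr) => // l.
  by rewrite ffunE lexx neY.
have c_on_X x : inX loX hiX x -> f x j = c.
  move=> xX; pose z : state n := [ffun l => if l == i then x l else loY l].
  have zY : inX loY hiY z.
    by move=> l; rewrite ffunE; case: eqP => [->|_]; [have := xX i; lia | rewrite lexx neY].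
  rewrite (incr_invariant_agree f_incr xX (subYX _ zY)) ?fh ?c_on_Y // => l.
  by rewrite negbK ffunE => ->.
have [x [xX [lti]]] := proj1 (fG i j s) ijE.
rewrite (c_on_X _ xX) (c_on_X _ (incr_inX xX lti)).
by case: ifP; rewrite ltxx.
Qed.
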